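(* Let $e>1$ be odd, $t\ge0$ an integer, $\mathbf c=(t+(1-e)/2,0)$ and $\mu=(\mu^1,\mu^2)$ a bipartition. Then the partition associated to the $1$-runner abacus $\mathfrak A_e(\mu,\mathbf c)=\{2j+e: j\in\mathfrak B(\mu,\mathbf c)^1\}\cup\{2j: j\in\mathfrak B(\mu,\mathbf c)^2\}$ equals $\Phi_t(\mu)$.
   Context: A $1$-runner abacus is a subset $\mathfrak A\subseteq\mathbb Z$ such that for some $n\ge1$, $-j\in\mathfrak A$ and $j\notin\mathfrak A$ for all $j\ge n$. List its elements $a_1>a_2>\cdots$; holes are elements of $\mathbb Z\setminus\mathfrak A$; $\lambda_j$ is the number of holes less than $a_j$, and $(\lambda_1,\lambda_2,\dots)$ is the partition associated to $\mathfrak A$; its charge is $a_1-\lambda_1$. For a bipartition $\mu$ and $\mathbf c=(c_1,c_2)\in\mathbb Z^2$ the symbol is $\mathfrak B(\mu,\mathbf c)=(\mathfrak B^1,\mathfrak B^2)$ with $\mathfrak B^i=\{\mu^i_j-j+c_i+1: j\ge1\}$ (parts $\mu^i_j=0$ beyond the length). $\Delta_t=(t,t-1,\dots,1)$. $2$-quotient convention: for a partition $\lambda$ take a $\beta$-set $B$ of $\lambda$ (the set $\{\lambda_i+N-i:1\le i\le N\}$, $N$ at least the number of parts) with $|B|$ odd, put $B^0=\{x/2:x\in B\text{ even}\}$, $B^1=\{(x-1)/2: x\in B\text{ odd}\}$, and $\lambda^{(2)}=(\text{partition with }\beta\text{-set }B^0,\ \text{partition with }\beta\text{-set }B^1)$.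 For $\lambda$ with $2$-core $\Delta_t$ and $\lambda^{(2)}=(\nu^1,\nu^2)$, $\bar\lambda^{(2)}=(\nu^1,\nu^2)$ if $t$ is even and $(\nu^2,\nu^1)$ if $t$ is odd. $\Phi_t(\mu)$ is the unique partition $\lambda$ with $2$-core $\Delta_t$ and $\bar\lambda^{(2)}=\mu$. *)

From HB Require Import structures.
From mathcomp Require Import all_boot all_order all_algebra.
From mathcomp Require Import zify.
Set Implicit Arguments. Unset Strict Implicit. Unset Printing Implicit Defensive.
Import Order.TTheory GRing.Theory Num.Theory.

(* A partition is a weakly decreasing list of positive naturals;
   parts beyond the length are 0 (read with nth 0). *)
Definition is_partition (l : seq nat) : bool :=
  sorted geq l && all (fun x => 0 < x) l.

Definition Delta (t : nat) : seq nat := [seq t - i | i <- iota 0 t].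

(* nu is obtained from lam by removing a rim 2-hook: the skew diagram
   lam/nu consists of two adjacent cells, either in one row (cells (i,nu_i),
   (i,nu_i+1)) or in one column (cells (i,nu_i),(i+1,nu_{i+1}) with
   nu_i = nu_{i+1}), and nu is a partition. *)
Definition remove_domino (lam nu : seq nat) : Prop :=
  is_partition lam /\ is_partition nu /\
  exists i : nat,
    (nth 0 lam i = (nth 0 nu i).+2 /\
       forall k, k != i -> nth 0 lam k = nth 0 nu k) \/
    (nth 0 lam i = (nth 0 nu i).+1 /\ nth 0 lam i.+1 = (nth 0 nu i.+1).+1 /\
       nth 0 nu i = nth 0 nu i.+1 /\
       forall k, k != i -> k != i.+1 -> nth 0 lam k = nth 0 nu k).

Inductive domino_reach : seq nat -> seq nat -> Prop :=
  | dr_refl l : domino_reach l l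
  | dr_step l m n : remove_domino l m -> domino_reach m n -> domino_reach l n.

Definition two_core_is (lam kappa : seq nat) : Prop :=
  domino_reach lam kappa /\ forall nu, ~ remove_domino kappa nu.

Definition betaset (N : nat) (lam : seq nat) : seq nat :=
  [seq nth 0 lam i + N - i.+1 | i <- iota 0 N].

Definition beta_partition (B : seq nat) : seq nat :=
  let s := sort geq (undup B) in
  [seq x <- [seq nth 0 s i - (size s - i.+1) | i <- iota 0 (size s)] | 0 < x].

(* 2-quotient, computed from the beta-set with N = 2*size(lam)+1 (odd,
   >= number of parts) beads *)
Definition quot2 (lam : seq nat) : seq nat * seq nat :=
  let B := betaset (size lam).*2.+1 lam in
  (beta_partition [seq x./2 | x <- B & ~~ odd x],
   beta_partition [seq (x.-1)./2 | x <- B & odd x]).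

Definition bar_quot2 (t : nat) (lam : seq nat) : seq nat * seq nat :=
  if odd t then ((quot2 lam).2, (quot2 lam).1) else quot2 lam.

Definition Phi_spec (t : nat) (mu : seq nat * seq nat) (lam : seq nat) : Prop :=
  two_core_is lam (Delta t) /\ bar_quot2 t lam = mu.

Local Open Scope ring_scope.

Definition in_symbol (mu : seq nat) (c : int) (x : int) : Prop :=
  exists j : nat, (1 <= j)%N /\ x = (nth 0%N mu j.-1)%:Z - j%:Z + c + 1.

Definition in_symbolb (mu : seq nat) (c : int) (x : int) : bool :=
  (x <= c - (size mu)%:Z) ||
  has (fun j : nat => x == (nth 0%N mu j.-1)%:Z - j%:Z + c + 1) (iota 1 (size mu)).

Lemma in_symbolP mu c x : reflect (in_symbol mu c x) (in_symbolb mu c x).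
Proof.
apply: (iffP idP).
- case/orP=> [hx|/hasP[j]].
  + exists (absz (c - x + 1)); split; first by lia.
    rewrite nth_default; last by lia.
    lia.
  + rewrite mem_iota => /andP[j1 _] /eqP ->; by exists j.
- case=> j [j1 ->]; rewrite /in_symbolb.
  case: (ltnP (size mu) j) => hj.
  + by rewrite nth_default; [apply/orP; left; lia | lia].
  + apply/orP; right; apply/hasP; exists j => //.
    by rewrite mem_iota; apply/andP; split; lia.
Qed.

Definition abacus_e (e : nat) (mu : seq nat * seq nat) (c : int * int) (x : int) : Prop :=
  (exists j, in_symbol mu.1 c.1 j /\ x = 2 * j + e%:Z) \/
  (exists j, in_symbol mu.2 c.2 j /\ x = 2 * j).

Definition abacus_eb (e : nat) (mu : seq nat * seq nat) (c : int * int) (x : int) : bool :=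
  ((2 %| x - e%:Z)%Z && in_symbolb mu.1 c.1 ((x - e%:Z) %/ 2)%Z) ||
  ((2 %| x)%Z && in_symbolb mu.2 c.2 (x %/ 2)%Z).

Lemma abacus_ebP e mu c x : reflect (abacus_e e mu c x) (abacus_eb e mu c x).
Proof.
apply: (iffP idP).
- case/orP=> /andP[hd /in_symbolP hs]; move: hd; rewrite dvdz_eq => /eqP hd.
  + left; exists ((x - e%:Z) %/ 2)%Z; split=> //.
    by rewrite mulrC hd addrNK.
  + right; exists (x %/ 2)%Z; split=> //; by rewrite mulrC hd.
- case=> [[j [hj ->]]|[j [hj ->]]]; apply/orP.
  + left; rewrite addrK dvdz_mulr //= mulKz //; exact/in_symbolP.
  + right; rewrite dvdz_mulr //= mulKz //; exact/in_symbolP.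
Qed.

Definition is_1runner_abacus (A : pred int) (n : nat) : Prop :=
  (1 <= n)%N /\ forall j : nat, (n <= j)%N -> A (- j%:Z) /\ ~~ A j%:Z.

Definition window (n : nat) : seq int := [seq k%:Z - n%:Z | k <- iota 0 (n.*2.+1)].

(* For an abacus with bound n: its elements a_1 > a_2 > ... lying in [-n, n]
   (all larger integers are holes; everything below is a bead, with lambda_j = 0) *)
Definition abacus_elems (A : pred int) (n : nat) : seq int :=
  sort (fun x y : int => y <= x) [seq x <- window n | A x].

(* lambda_j = number of holes less than a_j (all holes are >= -n);
   trailing zero parts are dropped *)
Definition abacus_partition (A : pred int) (n : nat) : seq nat :=
  [seq l <- [seq count (fun h => (h < a) && ~~ A h) (window n) | a <- abacus_elems A n]
     | (0 < l)%N].

From mathcomp Require Import all_boot all_order all_algebra zify.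
Import Order.TTheory GRing.Theory Num.Theory.
Set Implicit Arguments. Unset Strict Implicit. Unset Printing Implicit Defensive.
Local Open Scope ring_scope.

(* A partition [lam] with charge [c] is encoded by its set of beads
   [{lam_k - k + c : k >= 0}], which is full far to the left and empty far to
   the right; conversely every such set of integers comes from a unique pair
   [(lam, c)] (it is a 1-runner abacus).  Splitting the beads by parity gives
   two runners, each again the bead set of a partition with a charge, and the
   2-quotient is read off from them.  Removing a rim 2-hook from [lam] is
   sliding one bead two steps down into a hole, i.e. sliding one bead of one
   runner one step down: hence dominoes can be removed until both runners are
   empty, and the charges of the runners never change.  With charge [t + 1]
   the 2-core [Delta t] has empty runners with charges [0] and [t], so a
   partition has 2-core [Delta t] and bar-2-quotient [(mu1, mu2)] exactly when,
   with charge [t + 1], its runners are [mu2] with charge [0] and [mu1] with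
   charge [t].  These are the runners of the abacus [A_e(mu, c)]. *)

Section Partitions.
Implicit Types (lam l : seq nat) (i j k : nat).

Lemma sorted_geq_nth l :
  sorted geq l <-> forall k, (nth 0%N l k.+1 <= nth 0%N l k)%N.
Proof.
split=> [/(sortedP 0%N) hs k | h]; last by apply/(sortedP 0%N) => k _; exact: h.
by case: (ltnP k.+1 (size l)) => [/hs // | hk]; rewrite (nth_default _ hk).
Qed.

Lemma partition_nthS lam k :
  is_partition lam -> (nth 0%N lam k.+1 <= nth 0%N lam k)%N.
Proof. by case/andP=> /sorted_geq_nth. Qed.

Lemma partition_nth_mono lam i j :
  is_partition lam -> (i <= j)%N -> (nth 0%N lam j <= nth 0%N lam i)%N.
Proof.
move=> hp /subnKC <-; elim: (j - i)%N => [|d IH]; first by rewrite addn0.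
by rewrite addnS (leq_trans (partition_nthS _ hp)).
Qed.

Lemma partition_nth_gt0 lam k :
  is_partition lam -> (k < size lam)%N -> (0 < nth 0%N lam k)%N.
Proof. by case/andP=> _ /allP hpos hk; apply/hpos/mem_nth. Qed.

Lemma partition_behead lam : is_partition lam -> is_partition (behead lam).
Proof. by case: lam => // a l /andP[/path_sorted hs /andP[_ hpos]]; apply/andP. Qed.

Lemma nth_filter_pos l k :
  sorted geq l -> nth 0%N [seq x <- l | (0 < x)%N] k = nth 0%N l k.
Proof.
elim: l k => [//|a l IH] k hs /=; have hl := path_sorted hs.
case: (posnP a) => [a0 | apos]; last by case: k => //= k; rewrite IH.
have /allP hle : all (geq a) l.
  by apply: order_path_min hs => x y z /= h1 h2; exact: leq_trans h2 h1.
have l0 x : x \in l -> x = 0%N by move/hle; rewrite a0 /= leqn0 => /eqP.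
rewrite (_ : [seq x <- l | _] = [::]); last first.
  by apply/eqP; rewrite -[_ == _]negbK -has_filter; apply/hasPn => x /l0 ->.
case: k => [|k] /=; first by [].
by case: (ltnP k (size l)) => hk; [rewrite (l0 _ (mem_nth 0%N hk)) | rewrite nth_default].
Qed.

Lemma partition_filter_pos l :
  sorted geq l -> is_partition [seq x <- l | (0 < x)%N].
Proof.
move=> hs; apply/andP; split; last by apply/allP=> x; rewrite mem_filter => /andP[].
by apply: sorted_filter hs => x y z /= h1 h2; exact: leq_trans h2 h1.
Qed.

Lemma filter_pos_nth_partition (l : seq nat) :
  (forall k, (nth 0%N l k.+1 <= nth 0%N l k)%N) ->
  is_partition [seq x <- l | (0 < x)%N] /\
  forall k, nth 0%N [seq x <- l | (0 < x)%N] k = nth 0%N l k.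
Proof.
by move/sorted_geq_nth=> hs; split=> [|k]; [exact: partition_filter_pos | exact: nth_filter_pos].
Qed.

Lemma nth_le_sumn l k : (nth 0%N l k <= sumn l)%N.
Proof.
by elim: l k => [|a l IH] [|k] //=; [exact: leq_addr | exact: leq_trans (IH k) (leq_addl _ _)].
Qed.

Lemma sumn_filter_pos l : sumn [seq x <- l | (0 < x)%N] = sumn l.
Proof. by elim: l => [//|a l IH] /=; case: (posnP a) => [->|_] /=; rewrite IH. Qed.

End Partitions.

(** * Beads *)

(* The symbol [B(lam, c)] of the paper, with rows indexed from [0]. *)
Definition beads (lam : seq nat) (c : int) (x : int) : Prop :=
  exists k : nat, x = (nth 0%N lam k)%:Z - k%:Z + c.

Section Beads.
Implicit Types (lam nu : seq nat) (c x : int).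

Lemma in_symbol_beads lam c x : in_symbol lam c x <-> beads lam c x.
Proof.
split=> [[j [j1 ->]] | [k ->]]; last by exists k.+1; split=> //=; lia.
by exists j.-1; case: j j1 => //= j _; lia.
Qed.

Lemma beadsP lam c x : reflect (beads lam c x) (in_symbolb lam c x).
Proof. by apply: (iffP (in_symbolP _ _ _)) => /in_symbol_beads. Qed.

Lemma beads_shift lam c x c' x' : c - x = c' - x' -> beads lam c x <-> beads lam c' x'.
Proof. by move=> e; split=> -[k hk]; exists k; lia. Qed.

Lemma beads_eq_nth lam nu c x :
  (forall k, nth 0%N lam k = nth 0%N nu k) -> beads lam c x <-> beads nu c x.
Proof. by move=> e; split=> -[k hk]; exists k; rewrite ?e in hk *. Qed.

Lemma beads_nil c x : beads [::] c x <-> x <= c.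
Proof.
split=> [[k ->] | hx]; first by rewrite nth_nil; lia.
by exists `|c - x|%N; rewrite nth_nil; lia.
Qed.

Lemma beads_low lam c x : x <= c - (size lam)%:Z -> beads lam c x.
Proof. by move=> hx; exists `|c - x|%N; rewrite nth_default; lia. Qed.

Lemma beads_head lam c : beads lam c ((nth 0%N lam 0)%:Z + c).
Proof. by exists 0%N; lia. Qed.

Lemma beads_le_head lam c x :
  is_partition lam -> beads lam c x -> x <= (nth 0%N lam 0)%:Z + c.
Proof. by move=> hp [k ->]; have := partition_nth_mono hp (leq0n k); lia. Qed.

Lemma beads_cons lam c x :
  beads lam c x <-> x = (nth 0%N lam 0)%:Z + c \/ beads (behead lam) (c - 1) x.
Proof.
split=> [[[|k] ->] | [-> | [k ->]]].
- by left; lia.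
- by right; exists k; rewrite nth_behead; lia.
- by exists 0%N; lia.
- by exists k.+1; rewrite nth_behead; lia.
Qed.

Lemma beads_behead_lt lam c x : is_partition lam ->
  beads (behead lam) (c - 1) x -> x < (nth 0%N lam 0)%:Z + c.
Proof.
by move=> hp [k ->]; rewrite nth_behead; have := partition_nth_mono hp (leq0n k.+1); lia.
Qed.

Lemma nth_sub_index_lt lam i j : is_partition lam -> (i < j)%N ->
  (nth 0%N lam j)%:Z - j%:Z < (nth 0%N lam i)%:Z - i%:Z.
Proof. by move=> hp hij; have := partition_nth_mono hp (ltnW hij); lia. Qed.

Lemma nth_sub_index_inj lam i j : is_partition lam ->
  (nth 0%N lam i)%:Z - i%:Z = (nth 0%N lam j)%:Z - j%:Z -> i = j.
Proof.
move=> hp e; case: (ltngtP i j) => // hij; have := nth_sub_index_lt hp hij; lia.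
Qed.

Lemma beads_inj lam lam' c c' : is_partition lam -> is_partition lam' ->
  (forall x, beads lam c x <-> beads lam' c' x) -> lam = lam' /\ c = c'.
Proof.
move: {2}(size lam + size lam')%N (leqnn (size lam + size lam')) => n.
elim: n lam lam' c c' => [|n IH] lam lam' c c' hn hp hp' e;
  have e0 : (nth 0%N lam 0)%:Z + c = (nth 0%N lam' 0)%:Z + c'
    by have := beads_le_head hp' (proj1 (e _) (beads_head lam c));
       have := beads_le_head hp (proj2 (e _) (beads_head lam' c')); lia.
  by case: lam lam' hn e0 {hp hp' e} => [|? ?] [|? ?] //= _ e0; split=> //; lia.
have e' x : beads (behead lam) (c - 1) x <-> beads (behead lam') (c' - 1) x.
  split=> hx.
  - have /e/beads_cons[|//] : beads lam c x by apply/beads_cons; right.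
    by have := beads_behead_lt hp hx; lia.
  - have /e/beads_cons[|//] : beads lam' c' x by apply/beads_cons; right.
    by have := beads_behead_lt hp' hx; lia.
have hsz : (size (behead lam) + size (behead lam') <= n)%N.
  by rewrite !size_behead; lia.
have [eb ec] := IH _ _ _ _ hsz (partition_behead hp) (partition_behead hp') e'.
split; last by lia.
have hd : nth 0%N lam 0 = nth 0%N lam' 0 by lia.
case: lam lam' hp hp' eb hd {hn hsz e e' e0} => [|a l] [|a' l'] //= hp hp'.
- by move=> _ a0; have := partition_nth_gt0 hp' (ltn0Sn _); rewrite /= -a0.
- by move=> _ a0; have := partition_nth_gt0 hp (ltn0Sn _); rewrite /= a0.
- by move=> -> ->.
Qed.

End Beads.

(** * From bead sets to partitions *)

(* For a strictly decreasing list [s] of beads, all [>= L], the entry of a bead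
   [a] counts the holes in [[L, a)]. *)
Fixpoint hole_counts (L : int) (s : seq int) : seq nat :=
  if s is a :: s' then (`|a - L| - size s')%N :: hole_counts L s' else [::].

Definition part_of_beads (L : int) (s : seq int) : seq nat :=
  [seq x <- hole_counts L s | (0 < x)%N].

Section PartOfBeads.
Variable L : int.
Implicit Types (s : seq int) (a x : int).

Lemma sorted_gt_cons a s : sorted >%R (a :: s) -> sorted >%R s /\ all (>%R a) s.
Proof.
move=> hs; split; first exact: path_sorted hs.
by apply: order_path_min hs => x y z /= h1 h2; exact: lt_trans h2 h1.
Qed.

Lemma sorted_gt_head a s : sorted >%R (a :: s) -> all (fun x => L <= x) (a :: s) ->
  L + (size s)%:Z <= a.
Proof.
elim: s a => [|b s IH] a hs /= /andP[hLa hL]; first lia.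
case/sorted_gt_cons: hs => hs /= /andP[hba _].
by have := IH b hs hL; lia.
Qed.

Lemma hole_counts_sorted s : sorted >%R s -> all (fun x => L <= x) s ->
  sorted geq (hole_counts L s).
Proof.
elim: s => [//|a s IH] /sorted_gt_cons[hs hlt] /= /andP[hLa hL].
case: s IH hs hlt hL => [//|b s] IH hs /= /andP[hab _] hL.
have := IH hs hL; have := sorted_gt_head hs hL; rewrite /= => hb ->.
by rewrite andbT /geq /=; lia.
Qed.

Lemma beads_hole_counts s x : sorted >%R s -> all (fun x => L <= x) s ->
  beads (hole_counts L s) (L + (size s)%:Z - 1) x <-> x < L \/ x \in s.
Proof.
elim: s => [|a s IH] hs hL /=.
  by rewrite beads_nil in_nil; split; [lia | case=> //; lia].
have hhead := sorted_gt_head hs hL.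
case/sorted_gt_cons: hs => hs _; case/andP: hL => _ hL.
rewrite beads_cons /= in_cons (beads_shift _ (c' := L + (size s)%:Z - 1) (x' := x)) ?IH //;
  last lia.
split=> [[hx | [hx | hx]] | [hx | /orP[/eqP hx | hx]]].
- by right; apply/orP; left; apply/eqP; lia.
- by left.
- by right; rewrite hx orbT.
- by right; left.
- by left; lia.
- by right; right.
Qed.

Lemma hole_counts_count s : sorted >%R s ->
  hole_counts L s = [seq (`|a - L| - count (fun b => (b < a)%R) s)%N | a <- s].
Proof.
elim: s => [//|a s IH] /sorted_gt_cons[hs hlt] /=.
rewrite ltxx add0n IH //; congr cons.
  by congr (_ - _)%N; rewrite -count_predT; apply: eq_in_count => x /(allP hlt).
apply/eq_in_map => b /(allP hlt) /= hba.
by rewrite (_ : a < b = false) //; apply/negbTE; rewrite -leNgt ltW.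
Qed.

Lemma part_of_beads_partition s : sorted >%R s -> all (fun x => L <= x) s ->
  is_partition (part_of_beads L s).
Proof. by move=> hs hL; apply/partition_filter_pos/hole_counts_sorted. Qed.

Lemma beads_part_of_beads s x : sorted >%R s -> all (fun x => L <= x) s ->
  beads (part_of_beads L s) (L + (size s)%:Z - 1) x <-> x < L \/ x \in s.
Proof.
move=> hs hL; rewrite -beads_hole_counts //; apply: beads_eq_nth => k.
exact/nth_filter_pos/hole_counts_sorted.
Qed.

End PartOfBeads.

Lemma sorted_ge_uniq (s : seq int) : sorted >=%R s -> uniq s -> sorted >%R s.
Proof.
elim: s => [//|a [//|b s] IH] /= /andP[hab hs] /andP[ha hu].
have /= -> := IH hs hu; rewrite andbT lt_def hab andbT.
by apply: contraNneq ha => ->; rewrite mem_head.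
Qed.

Lemma count_lt_iota b m : count (fun k => (k < b)%N) (iota 0 m) = minn b m.
Proof. by elim: m => [|m IH]; rewrite ?minn0 // -addn1 iotaD count_cat IH /=; lia. Qed.

Lemma count_split (T : Type) (p q : pred T) s :
  count p s = (count (fun x => p x && q x) s + count (fun x => p x && ~~ q x) s)%N.
Proof. by elim: s => [//|x s IH] /=; rewrite IH; case: (p x); case: (q x) => /=; lia. Qed.

Section Abacus.
Variables (A : pred int) (n : nat).

Lemma mem_window x : (x \in window n) = (- n%:Z <= x <= n%:Z).
Proof.
apply/mapP/idP => [[k] | hx]; first by rewrite mem_iota => hk ->; lia.
by exists (absz (x + n%:Z)); [rewrite mem_iota | ]; lia.
Qed.

Lemma window_uniq : uniq (window n).
Proof. by rewrite map_inj_uniq ?iota_uniq // => i j /=; lia. Qed.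

Lemma count_window_lt a : - n%:Z <= a <= n%:Z ->
  count (fun h => h < a) (window n) = absz (a + n%:Z).
Proof.
move=> ha; rewrite count_map (eq_count (a2 := fun k => (k < absz (a + n%:Z)%R)%N)).
  by rewrite count_lt_iota; lia.
by move=> k /=; lia.
Qed.

Lemma mem_abacus_elems x : (x \in abacus_elems A n) = A x && (- n%:Z <= x <= n%:Z).
Proof. by rewrite mem_sort mem_filter mem_window. Qed.

Lemma abacus_elems_sorted : sorted >%R (abacus_elems A n).
Proof.
apply: sorted_ge_uniq; first by apply: sort_sorted => x y; exact: le_total.
by rewrite sort_uniq filter_uniq // window_uniq.
Qed.

Lemma abacus_elems_ge : all (fun x => - n%:Z <= x) (abacus_elems A n).
Proof. by apply/allP => x; rewrite mem_abacus_elems => /and3P[]. Qed.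

(* The holes below a bead [a] are the window points below [a] minus the beads
   below [a]. *)
Lemma abacus_partitionE :
  abacus_partition A n = part_of_beads (- n%:Z) (abacus_elems A n).
Proof.
rewrite /abacus_partition /part_of_beads hole_counts_count ?abacus_elems_sorted //.
congr filter; apply/eq_in_map => a; rewrite mem_abacus_elems => /andP[_ ha].
have := count_split (fun h => h < a) A (window n).
rewrite count_window_lt // -count_filter -(count_sort >=%R) -/(abacus_elems A n).
rewrite opprK; set u := count _ (abacus_elems _ _); set v := count _ (window n); lia.
Qed.

Lemma abacus_partition_beads : is_1runner_abacus A n ->
  is_partition (abacus_partition A n) /\
  exists c, forall x, beads (abacus_partition A n) c x <-> A x.
Proof.
have hs := abacus_elems_sorted; have hge := abacus_elems_ge.
case=> _ hA; rewrite abacus_partitionE; split; first exact: part_of_beads_partition.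
exists (- n%:Z + (size (abacus_elems A n))%:Z - 1) => x.
rewrite beads_part_of_beads // mem_abacus_elems.
have [hx | hx] := ltP x (- n%:Z).
  have [+ _] := hA (absz x) ltac:(lia); rewrite (_ : - (absz x)%:Z = x); last lia.
  by split=> // _; left.
have [hxn | hxn] := leP x n%:Z.
  by split=> [[hlt | /andP[//]] | hAx]; [lia | right; rewrite hAx /=; lia].
have [_ +] := hA (absz x) ltac:(lia); rewrite (_ : (absz x)%:Z = x); last lia.
by move/negbTE => ->; split=> [[|]|] //; lia.
Qed.

End Abacus.

Lemma beads_surj (P : pred int) (L H : int) :
  (forall x, x < L -> P x) -> (forall x, H < x -> ~~ P x) ->
  exists lam c, is_partition lam /\ forall x, beads lam c x <-> P x.
Proof.
move=> hlo hhi.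
have [|hp [c hc]] := @abacus_partition_beads P (absz L + absz H).+1.
  by split=> // j hj; split; [apply: hlo | apply: hhi]; lia.
by exists (abacus_partition P (absz L + absz H).+1), c.
Qed.

(** * Runners *)

(* Runner [r] of the 2-abacus of [lam]: its bead at position [2 w + r] is read
   as a bead at [w] of [al] with charge [a]. *)
Definition runner (lam : seq nat) (c r : int) (al : seq nat) (a : int) : Prop :=
  forall w, beads lam c (2 * w + r) <-> beads al a w.

Section Runners.
Implicit Types (lam al be : seq nat) (a b c r : int).

Lemma runner_recharge lam c r al a c' r' : runner lam c r al a ->
  (2 %| (r' - c') - (r - c))%Z -> exists a', runner lam c' r' al a'.
Proof.
move=> h /dvdzP[d hd]; exists (a - d) => w.
rewrite (beads_shift _ (c' := c) (x' := 2 * (w + d) + r)); last lia.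
by rewrite h; apply: beads_shift; lia.
Qed.

Lemma exists_runner lam c r : is_partition lam ->
  exists al a, is_partition al /\ runner lam c r al a.
Proof.
move=> hp.
case: (@beads_surj (fun w => in_symbolb lam c (2 * w + r))
  (- `|c| - (size lam)%:Z - `|r|) ((nth 0%N lam 0)%:Z + `|c| + `|r|)).
- by move=> w hw; apply/beadsP/beads_low; lia.
- by move=> w hw; apply/beadsP => /(beads_le_head hp); lia.
by move=> al [a [hal h]]; exists al, a; split=> // w; rewrite h; split=> /beadsP.
Qed.

Lemma runner_inj lam c r al a al' a' : is_partition al -> is_partition al' ->
  runner lam c r al a -> runner lam c r al' a' -> al = al' /\ a = a'.
Proof. by move=> hal hal' h h'; apply: beads_inj => // w; rewrite -h -h'. Qed.

Lemma runners_inj lam c lam' c' al a be b :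
  is_partition lam -> is_partition lam' ->
  runner lam c 0 al a -> runner lam c 1 be b ->
  runner lam' c' 0 al a -> runner lam' c' 1 be b -> lam = lam' /\ c = c'.
Proof.
move=> hp hp' h0 h1 h0' h1'; apply: beads_inj => // x.
have [w [-> | ->]] : exists w, x = 2 * w + 0 \/ x = 2 * w + 1 by exists (x %/ 2)%Z; lia.
- by rewrite h0 h0'.
- by rewrite h1 h1'.
Qed.

End Runners.

(** * Beta-sets and 2-quotients *)

Lemma hole_counts_nat (s : seq nat) : hole_counts 0 (map Posz s) =
  [seq (nth 0%N s i - (size s - i.+1))%N | i <- iota 0 (size s)].
Proof.
elim: s => [//|a s IH] /=; rewrite IH size_map; congr cons; first by lia.
by rewrite -[in RHS](addn0 1%N) iotaDl -map_comp; apply: eq_map => i /=; rewrite add1n subSS.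
Qed.

Lemma beta_partition_eq (B : seq nat) mu c : is_partition mu ->
  (forall y : nat, y \in B <-> beads mu c y) -> (forall x, x < 0 -> beads mu c x) ->
  beta_partition B = mu.
Proof.
move=> hmu hB hneg.
set s := map Posz (sort geq (undup B)).
have hs : sorted >%R s.
  rewrite sorted_map; apply: sub_sorted (_ : sorted gtn _) => [x y /= | ]; first lia.
  by rewrite gtn_sorted_uniq_geq sort_uniq undup_uniq sort_sorted //; exact: leq_total.
have hge : all (fun x => 0 <= x) s by apply/allP => y /mapP[z _ ->].
have -> : beta_partition B = part_of_beads 0 s by rewrite /part_of_beads hole_counts_nat.
have [] // := beads_inj (part_of_beads_partition hs hge) hmu (c' := c) (c := 0 + (size s)%:Z - 1).
move=> x; rewrite beads_part_of_beads //.
have [hx | hx] := ltP x 0; first by split=> [_|]; [exact: hneg | left].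
have [y ->] : exists y : nat, x = y by exists (absz x); lia.
rewrite -hB /s (mem_map (can_inj absz_nat)) mem_sort mem_undup.
by split=> [[|//] | ]; [lia | right].
Qed.

Lemma mem_betaset N lam (y : nat) : (size lam <= N)%N ->
  y \in betaset N lam <-> beads lam (N%:Z - 1) y.
Proof.
move=> hN; split=> [/mapP[i] | [k hk]]; first by rewrite mem_iota => hi ->; exists i; lia.
apply/mapP; exists k; last lia.
rewrite mem_iota /=; case: (ltnP k N) => // hkN.
by move: hk; rewrite nth_default; lia.
Qed.

Lemma mem_even_half (B : seq nat) (z : nat) :
  z \in [seq x./2 | x <- B & ~~ odd x] <-> z.*2 \in B.
Proof.
split=> [/mapP[x] | h]; last by apply/mapP; exists z.*2; rewrite ?doubleK // mem_filter odd_double.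
by rewrite mem_filter => /andP[hx hB] ->; rewrite -[x]odd_double_half (negbTE hx) in hB.
Qed.

Lemma mem_odd_half (B : seq nat) (z : nat) :
  z \in [seq x.-1./2 | x <- B & odd x] <-> z.*2.+1 \in B.
Proof.
split=> [/mapP[x] | h]; last first.
  by apply/mapP; exists z.*2.+1; rewrite /= ?doubleK // mem_filter /= odd_double.
rewrite mem_filter => /andP[hx hB] ->.
by rewrite -[x]odd_double_half hx in hB *; rewrite /= doubleK.
Qed.

Lemma quot2_fst lam al a : is_partition lam -> is_partition al ->
  runner lam ((size lam).*2)%:Z 0 al a -> (quot2 lam).1 = al.
Proof.
move=> hp hal h; apply: (beta_partition_eq (c := a)) => // [y | x hx].
  rewrite mem_even_half mem_betaset; last lia.
  by rewrite -h; apply: beads_shift; lia.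
by apply/h/beads_low; lia.
Qed.

Lemma quot2_snd lam be b : is_partition lam -> is_partition be ->
  runner lam ((size lam).*2)%:Z 1 be b -> (quot2 lam).2 = be.
Proof.
move=> hp hbe h; apply: (beta_partition_eq (c := b)) => // [y | x hx].
  rewrite mem_odd_half mem_betaset; last lia.
  by rewrite -h; apply: beads_shift; lia.
by apply/h/beads_low; lia.
Qed.

(* With charge [t + 1] the runner of even positions is the second component of
   the 2-quotient exactly when [t] is odd, which [bar_quot2] compensates. *)
Lemma bar_quot2_runners t lam al a be b :
  is_partition lam -> is_partition al -> is_partition be ->
  runner lam (t%:Z + 1) 0 al a -> runner lam (t%:Z + 1) 1 be b ->
  bar_quot2 t lam = (be, al).
Proof.
move=> hp hal hbe h0 h1; set k := ((size lam).*2)%:Z.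
rewrite /bar_quot2 [quot2 lam]surjective_pairing; case: ifP => ht.
- have [a' h0'] := runner_recharge (c' := k) (r' := 0) h0 ltac:(lia).
  have [b' h1'] := runner_recharge (c' := k) (r' := 1) h1 ltac:(lia).
  by rewrite (quot2_fst hp hal h0') (quot2_snd hp hbe h1').
- have [b' h1'] := runner_recharge (c' := k) (r' := 0) h1 ltac:(lia).
  have [a' h0'] := runner_recharge (c' := k) (r' := 1) h0 ltac:(lia).
  by rewrite (quot2_fst hp hbe h1') (quot2_snd hp hal h0').
Qed.

(** * Rim hooks *)

Definition move_bead (P : int -> Prop) (x d y : int) : Prop :=
  (P y /\ y <> x) \/ y = x - d.

Section RimHooks.
Implicit Types (lam nu al ga : seq nat) (a c w x y : int).

Lemma row_domino_beads lam nu i c : is_partition lam -> is_partition nu ->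
  nth 0%N lam i = (nth 0%N nu i).+2 ->
  (forall k, k != i -> nth 0%N lam k = nth 0%N nu k) ->
  let x := (nth 0%N lam i)%:Z - i%:Z + c in
  ~ beads lam c (x - 2) /\ forall y, beads nu c y <-> move_bead (beads lam c) x 2 y.
Proof.
move=> hp hn hi hk x; split.
  case=> k hx; case: (ltngtP k i) => hki; last by subst k; lia.
  - by have := nth_sub_index_lt hp hki; lia.
  - rewrite hk in hx; last by rewrite neq_ltn hki orbT.
    by have := partition_nthS i hn; have := partition_nth_mono hn hki; lia.
move=> y; split=> [[k ->] | [[[k ->] hne] | ->]]; last by exists i; lia.
  case: (eqVneq k i) => [-> | hki]; first by right; lia.
  left; split; first by exists k; rewrite hk.
  by rewrite -hk // => e; move/eqP: hki; apply; apply: (nth_sub_index_inj hp); lia.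
by case: (eqVneq k i) => [hki | hki]; [subst k | exists k; rewrite hk].
Qed.

Lemma column_domino_beads lam nu i c : is_partition lam -> is_partition nu ->
  nth 0%N lam i = (nth 0%N nu i).+1 -> nth 0%N lam i.+1 = (nth 0%N nu i.+1).+1 ->
  nth 0%N nu i = nth 0%N nu i.+1 ->
  (forall k, k != i -> k != i.+1 -> nth 0%N lam k = nth 0%N nu k) ->
  let x := (nth 0%N lam i)%:Z - i%:Z + c in
  ~ beads lam c (x - 2) /\ forall y, beads nu c y <-> move_bead (beads lam c) x 2 y.
Proof.
move=> hp hn hi hi1 he hk x; split.
  case=> k hx; case: (ltngtP k i.+1) => hki; last by subst k; lia.
  - by have := partition_nth_mono hp (_ : (k <= i)%N); lia.
  - rewrite hk in hx; last (by rewrite neq_ltn hki orbT); last first.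
      by rewrite neq_ltn (ltn_trans _ hki) ?orbT.
    by have := partition_nthS i.+1 hn; have := partition_nth_mono hn hki; lia.
move=> y; split=> [[k ->] | [[[k ->] hne] | ->]]; last by exists i.+1; lia.
  case: (eqVneq k i) => [-> | hki]; first by left; split; [exists i.+1 | ]; lia.
  case: (eqVneq k i.+1) => [-> | hki1]; first by right; lia.
  left; split; first by exists k; rewrite hk.
  by rewrite -hk // => e; move/eqP: hki; apply; apply: (nth_sub_index_inj hp); lia.
case: (eqVneq k i) => [hki | hki]; first by subst k.
case: (eqVneq k i.+1) => [hki1 | hki1]; first by subst k; exists i; lia.
by exists k; rewrite hk.
Qed.

Lemma remove_domino_beads lam nu c : remove_domino lam nu -> exists x,
  [/\ beads lam c x, ~ beads lam c (x - 2)
    & forall y, beads nu c y <-> move_bead (beads lam c) x 2 y].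
Proof.
case=> hp [hn [i [[hi hk] | [hi [hi1 [he hk]]]]]].
- by have [hx hy] := row_domino_beads c hp hn hi hk; eexists; split; first exists i.
- by have [hx hy] := column_domino_beads c hp hn hi hi1 he hk; eexists; split; first exists i.
Qed.

Lemma beads_remove_column_domino lam c i : is_partition lam ->
  nth 0%N lam i.+1 = nth 0%N lam i -> (nth 0%N lam i.+2 < nth 0%N lam i)%N ->
  exists nu, remove_domino lam nu /\ forall y,
    beads nu c y <-> move_bead (beads lam c) ((nth 0%N lam i)%:Z - i%:Z + c) 2 y.
Proof.
move=> hp hi1 hi2.
set l := set_nth 0%N (set_nth 0%N lam i (nth 0%N lam i).-1) i.+1 (nth 0%N lam i).-1.
have hl k : nth 0%N l k = if k \in [:: i; i.+1] then (nth 0%N lam i).-1 else nth 0%N lam k.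
  by rewrite nth_set_nth /= nth_set_nth /= !inE orbC; case: (k == i.+1); case: (k == i).
have [|hn hnth] := @filter_pos_nth_partition l.
  move=> k; have := partition_nthS k hp; rewrite !hl !inE eqSS.
  by do ![case: eqP => ? /=]; try subst; lia.
set nu := [seq x <- l | (0 < x)%N] in hn hnth.
have {}hnth k : nth 0%N nu k =
    if k \in [:: i; i.+1] then (nth 0%N lam i).-1 else nth 0%N lam k.
  by rewrite hnth hl.
have v1 : nth 0%N lam i = (nth 0%N nu i).+1 by rewrite hnth mem_head; lia.
have v2 : nth 0%N lam i.+1 = (nth 0%N nu i.+1).+1 by rewrite hnth !inE eqxx orbT; lia.
have v3 : nth 0%N nu i = nth 0%N nu i.+1 by rewrite !hnth mem_head !inE eqxx orbT.
have v4 k : k != i -> k != i.+1 -> nth 0%N lam k = nth 0%N nu k.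
  by move=> h1 h2; rewrite hnth !inE (negbTE h1) (negbTE h2).
have [_ hmove] := column_domino_beads c hp hn v1 v2 v3 v4.
by exists nu; split=> //; split=> //; split=> //; exists i; right.
Qed.

Lemma beads_remove_row_domino lam c i : is_partition lam ->
  ((nth 0%N lam i.+1).+2 <= nth 0%N lam i)%N ->
  exists nu, remove_domino lam nu /\ forall y,
    beads nu c y <-> move_bead (beads lam c) ((nth 0%N lam i)%:Z - i%:Z + c) 2 y.
Proof.
move=> hp hi1; set l := set_nth 0%N lam i (nth 0%N lam i - 2)%N.
have hl k : nth 0%N l k = if k == i then (nth 0%N lam i - 2)%N else nth 0%N lam k.
  by rewrite nth_set_nth.
have [|hn hnth] := @filter_pos_nth_partition l.
  by move=> k; have := partition_nthS k hp; rewrite !hl; do ![case: eqP => ? /=]; try subst; lia.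
set nu := [seq x <- l | (0 < x)%N] in hn hnth.
have v1 : nth 0%N lam i = (nth 0%N nu i).+2 by rewrite hnth hl eqxx; lia.
have v2 k : k != i -> nth 0%N lam k = nth 0%N nu k by move=> hk; rewrite hnth hl (negbTE hk).
have [_ hmove] := row_domino_beads c hp hn v1 v2.
by exists nu; split=> //; split=> //; split=> //; exists i; left.
Qed.

(* A column domino if [x - 1] is a bead, a row domino if it is a hole. *)
Lemma beads_remove_domino lam c x : is_partition lam ->
  beads lam c x -> ~ beads lam c (x - 2) ->
  exists nu, remove_domino lam nu /\
    forall y, beads nu c y <-> move_bead (beads lam c) x 2 y.
Proof.
move=> hp [i ->] hx2; have hi := partition_nthS i hp.
case: (beadsP lam c ((nth 0%N lam i)%:Z - i%:Z + c - 1)) => [[k hk] | hx1].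
  have ek : k = i.+1.
    case: (ltngtP k i.+1) => hki //; last by have := nth_sub_index_lt hp hki; lia.
    by have := partition_nth_mono hp (_ : (k <= i)%N); lia.
  subst k; have hi2 : (nth 0%N lam i.+2 < nth 0%N lam i)%N.
    rewrite ltnNge; apply/negP => hge; apply: hx2; exists i.+2.
    by have := partition_nthS i.+1 hp; lia.
  by apply: (beads_remove_column_domino c hp) => //; lia.
apply: (beads_remove_row_domino c hp).
case: (leqP (nth 0%N lam i.+1).+2 (nth 0%N lam i)) => // hlt.
have [e | e] : nth 0%N lam i.+1 = nth 0%N lam i \/ (nth 0%N lam i.+1).+1 = nth 0%N lam i by lia.
- by case: hx1; exists i.+1; lia.
- by case: hx2; exists i.+1; lia.
Qed.

Lemma beads_remove_box al a w : is_partition al ->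
  beads al a w -> ~ beads al a (w - 1) ->
  exists ga, [/\ is_partition ga, (sumn ga < sumn al)%N
    & forall y, beads ga a y <-> move_bead (beads al a) w 1 y].
Proof.
move=> hp [i ->] hw1; have hi := partition_nthS i hp.
have hi1 : nth 0%N al i.+1 != nth 0%N al i by apply/eqP => e; apply: hw1; exists i.+1; lia.
set l := set_nth 0%N al i (nth 0%N al i).-1.
have hl k : nth 0%N l k = if k == i then (nth 0%N al i).-1 else nth 0%N al k.
  by rewrite nth_set_nth.
have [|hg hnth] := @filter_pos_nth_partition l.
  by move=> k; have := partition_nthS k hp; rewrite !hl; do ![case: eqP => ? /=]; try subst; lia.
exists [seq x <- l | (0 < x)%N]; split=> // [|y].
  by rewrite sumn_filter_pos sumn_set_nth0; have := nth_le_sumn al i; lia.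
split=> [[k ->] | [[[k ->] hne] | ->]].
- rewrite hnth hl; case: eqP => [-> | /eqP hki]; first by right; lia.
  left; split; first by exists k.
  by move=> e; move/eqP: hki; apply; apply: (nth_sub_index_inj hp); lia.
- by case: (eqVneq k i) => [hki | hki]; [subst k | exists k; rewrite hnth hl (negbTE hki)].
- by exists i; rewrite hnth hl eqxx; lia.
Qed.

Lemma last_bead al a : is_partition al -> al != [::] ->
  exists w, beads al a w /\ ~ beads al a (w - 1).
Proof.
move=> hp hne; set i := (size al).-1.
have hi : (i < size al)%N by rewrite /i; case: (al) hne.
have hi1 : nth 0%N al i.+1 = 0%N by rewrite nth_default // /i; case: (al) hne.
have := partition_nth_gt0 hp hi.
exists ((nth 0%N al i)%:Z - i%:Z + a); split; first by exists i.
case=> k hk; case: (leqP k i) => hki.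
- by have := partition_nth_mono hp hki; lia.
- by have := partition_nth_mono hp hki; rewrite hi1; lia.
Qed.

End RimHooks.

Section DominoRunners.
Implicit Types (lam nu al ga : seq nat) (a c r w x : int).

Lemma runner_move_same lam nu c r al a ga w :
  runner lam c r al a ->
  (forall y, beads nu c y <-> move_bead (beads lam c) (2 * w + r) 2 y) ->
  (forall y, beads ga a y <-> move_bead (beads al a) w 1 y) ->
  runner nu c r ga a.
Proof.
move=> h hnu hga y; rewrite hnu hga /move_bead h.
by split=> [[[hy hne] | e] | [[hy hne] | e]];
  [left; split=> //; lia | right; lia | left; split=> //; lia | right; lia].
Qed.

Lemma runner_move_other lam nu c r be b x :
  ~~ (2 %| x - r)%Z -> runner lam c r be b ->
  (forall y, beads nu c y <-> move_bead (beads lam c) x 2 y) ->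
  runner nu c r be b.
Proof.
move=> hx h hnu y; rewrite hnu /move_bead h.
by split=> [[[hy _] | e] | hy]; [ | lia | left; split=> //; lia].
Qed.

Lemma domino_reach_trans lam mu nu :
  domino_reach lam mu -> domino_reach mu nu -> domino_reach lam nu.
Proof. by elim=> // l m n hlm _ IH /IH; exact: dr_step. Qed.

Lemma reach_runner lam nu c r al a : domino_reach lam nu ->
  is_partition al -> runner lam c r al a ->
  exists2 ga, is_partition ga & runner nu c r ga a.
Proof.
move=> hreach; elim: hreach al => [l | l m n hlm _ IH] al hal h; first by exists al.
have [x [hx hx2 hmove]] := remove_domino_beads c hlm.
have [/dvdzP[w ew] | hodd] := boolP (2 %| x - r)%Z; last first.
  by apply: (IH al hal); apply: runner_move_other hodd h hmove.
have ex : x = 2 * w + r by lia.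
have hw : beads al a w by apply/h; rewrite -ex.
have hw1 : ~ beads al a (w - 1) by rewrite -h (_ : _ + r = x - 2) //; lia.
have [ga [hga _ hgmove]] := beads_remove_box hal hw hw1.
by apply: (IH ga hga); apply: runner_move_same h _ hgmove; rewrite -ex.
Qed.

Lemma empty_runner lam c r r' al a be b : ~~ (2 %| r - r')%Z ->
  is_partition lam -> is_partition al -> runner lam c r al a -> runner lam c r' be b ->
  exists2 nu, domino_reach lam nu &
    [/\ is_partition nu, runner nu c r [::] a & runner nu c r' be b].
Proof.
move=> hrr; move: {2}(sumn al) (leqnn (sumn al)) => m.
elim: m lam al => [|m IH] lam al hm hp hal h h';
  (have [eal | hne] := eqVneq al [::]; first by subst al; exists lam; [exact: dr_refl | ]).
  by case: al hal hm hne {h} => // k al' /andP[_ /andP[hk _]] /=; lia.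
have [w [hw hw1]] := last_bead a hal hne.
have [ga [hga hsum hgmove]] := beads_remove_box hal hw hw1.
have [|nu [hdom hmove]] := beads_remove_domino hp (proj2 (h w) hw).
  by rewrite (_ : _ - 2 = 2 * (w - 1) + r) ?h //; lia.
have hnu : is_partition nu by case: hdom => _ [].
have [||nu' hreach' rest] := IH nu ga _ hnu hga (runner_move_same h hmove hgmove).
- lia.
- by apply: runner_move_other h' hmove; lia.
- by exists nu'; [exact: dr_step hdom hreach' | ].
Qed.

End DominoRunners.

(** * The 2-core [Delta t] and the bijection [Phi_t] *)

Lemma nth_Delta t k : nth 0%N (Delta t) k = (t - k)%N.
Proof.
case: (ltnP k t) => hk; first by rewrite (nth_map 0%N) ?size_iota ?nth_iota.
by rewrite nth_default ?size_map ?size_iota //; lia.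
Qed.

Lemma Delta_partition t : is_partition (Delta t).
Proof.
apply/andP; split; first by apply/sorted_geq_nth => k; rewrite !nth_Delta; lia.
by apply/allP => x /mapP[i]; rewrite mem_iota => hi ->; lia.
Qed.

Lemma Delta_no_domino t nu : ~ remove_domino (Delta t) nu.
Proof.
case=> _ [hn [i [[hi hk] | [hi [hi1 [he _]]]]]]; last by move: hi hi1 he; rewrite !nth_Delta; lia.
have := hk i.+1; rewrite neq_ltn ltnSn orbT => /(_ isT).
by have := partition_nthS i hn; move: hi; rewrite !nth_Delta; lia.
Qed.

(* With charge [t + 1] the beads of [Delta t] are the odd numbers up to
   [2 t + 1] together with all integers [<= 1]. *)
Lemma Delta_runner0 t : runner (Delta t) (t%:Z + 1) 0 [::] 0.
Proof.
move=> w; rewrite beads_nil; split=> [[k] | hw]; first by rewrite nth_Delta; lia.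
by exists (absz (t%:Z + 1 - 2 * w)%R); rewrite nth_Delta; lia.
Qed.

Lemma Delta_runner1 t : runner (Delta t) (t%:Z + 1) 1 [::] t%:Z.
Proof.
move=> w; rewrite beads_nil; split=> [[k] | hw]; first by rewrite nth_Delta; lia.
have [hw0 | hw0] := leP 0 w.
- by exists (absz (t%:Z - w)%R); rewrite nth_Delta; lia.
- by exists (absz (t%:Z - 2 * w)%R); rewrite nth_Delta; lia.
Qed.

Lemma runners_reach_core lam c al a be b :
  is_partition lam -> is_partition al -> is_partition be ->
  runner lam c 0 al a -> runner lam c 1 be b ->
  exists2 nu, domino_reach lam nu &
    [/\ is_partition nu, runner nu c 0 [::] a & runner nu c 1 [::] b].
Proof.
move=> hp hal hbe h0 h1.
have [|nu hreach [hnu h0' h1']] := empty_runner _ hp hal h0 h1; first by [].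
have [|nu' hreach' [hnu' h1'' h0'']] := empty_runner _ hnu hbe h1' h0'; first by [].
by exists nu'; [exact: domino_reach_trans hreach hreach' | ].
Qed.

Lemma Phi_spec_of_runners t lam c mu1 mu2 :
  is_partition lam -> is_partition mu1 -> is_partition mu2 ->
  runner lam c 0 mu2 0 -> runner lam c 1 mu1 t%:Z -> Phi_spec t (mu1, mu2) lam.
Proof.
move=> hp hmu1 hmu2 h0 h1.
have [nu hreach [hnu hnu0 hnu1]] := runners_reach_core hp hmu2 hmu1 h0 h1.
have [enu ec] := runners_inj hnu (Delta_partition t) hnu0 hnu1 (Delta_runner0 t) (Delta_runner1 t).
subst nu c; split; first by split=> //; exact: Delta_no_domino.
exact: bar_quot2_runners.
Qed.

(* The charges of the runners are invariant under domino removal, so they can be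
   read off the 2-core. *)
Lemma Phi_spec_runners t mu lam : is_partition lam -> Phi_spec t mu lam ->
  runner lam (t%:Z + 1) 0 mu.2 0 /\ runner lam (t%:Z + 1) 1 mu.1 t%:Z.
Proof.
move=> hp [[hreach _] <-].
have [al [a [hal h0]]] := exists_runner (t%:Z + 1) 0 hp.
have [be [b [hbe h1]]] := exists_runner (t%:Z + 1) 1 hp.
have hnil : is_partition [::] by [].
have [ga hga /(runner_inj hnil hga (Delta_runner0 t))[_ ea]] := reach_runner hreach hal h0.
have [gb hgb /(runner_inj hnil hgb (Delta_runner1 t))[_ eb]] := reach_runner hreach hbe h1.
by subst a b; rewrite (bar_quot2_runners hp hal hbe h0 h1).
Qed.

Lemma Phi_spec_inj t mu lam lam' : is_partition lam -> is_partition lam' ->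
  Phi_spec t mu lam -> Phi_spec t mu lam' -> lam = lam'.
Proof.
move=> hp hp' /(Phi_spec_runners hp)[h0 h1] /(Phi_spec_runners hp')[h0' h1'].
by have [] := runners_inj hp hp' h0 h1 h0' h1'.
Qed.

(** * The abacus [A_e(mu, c)] *)

Section AbacusE.
Variables (e t : nat) (mu1 mu2 : seq nat).
Hypothesis e_odd : odd e.
Local Notation A := (abacus_eb e (mu1, mu2) (t%:Z - (e./2)%:Z, 0)).

Lemma abacus_e_even w : A (2 * w) <-> beads mu2 0 w.
Proof.
rewrite -in_symbol_beads; have := odd_double_half e; rewrite e_odd => he.
split=> [/abacus_ebP[[j [_ hj]] | [j [hj hjw]]] | hw]; first lia.
  by rewrite (_ : w = j) //; lia.
by apply/abacus_ebP; right; exists w.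
Qed.

Lemma abacus_e_odd w : A (2 * w + 1) <-> beads mu1 t w.
Proof.
have := odd_double_half e; rewrite e_odd => he.
split=> [/abacus_ebP[[j [/in_symbol_beads hj hjw]] | [j [_ hj]]] | hw].
- by rewrite (beads_shift _ (c' := t%:Z - (e./2)%:Z) (x' := j)) //; lia.
- lia.
- apply/abacus_ebP; left; exists (w - (e./2)%:Z); split; last lia.
  by apply/in_symbol_beads; rewrite /= (beads_shift _ (c' := t%:Z) (x' := w)) //; lia.
Qed.

Lemma abacus_e_1runner : is_partition mu1 -> is_partition mu2 ->
  exists n, is_1runner_abacus A n.
Proof.
move=> hmu1 hmu2.
exists (2 * (size mu1 + size mu2 + sumn mu1 + sumn mu2 + t)).+2; split=> // j hj.
have := nth_le_sumn mu1 0; have := nth_le_sumn mu2 0 => h2 h1.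
split.
  have [w [ew | ew]] : exists w, - j%:Z = 2 * w \/ - j%:Z = 2 * w + 1.
    by exists (- j%:Z %/ 2)%Z; lia.
  - by rewrite ew; apply/abacus_e_even/beads_low; lia.
  - by rewrite ew; apply/abacus_e_odd/beads_low; lia.
have [w [ew | ew]] : exists w, j%:Z = 2 * w \/ j%:Z = 2 * w + 1 by exists (j%:Z %/ 2)%Z; lia.
- by rewrite ew; apply/negP => /abacus_e_even /(beads_le_head hmu2); lia.
- by rewrite ew; apply/negP => /abacus_e_odd /(beads_le_head hmu1); lia.
Qed.

End AbacusE.

Local Close Scope ring_scope.
Unset Implicit Arguments.

Theorem lemma7p2 (e t : nat) (mu1 mu2 : seq nat) :
  odd e -> (1 < e)%N -> is_partition mu1 -> is_partition mu2 ->
  let A := abacus_eb e (mu1, mu2) ((t%:Z - (e./2)%:Z)%R, 0%R) in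
  (exists n, is_1runner_abacus A n) /\
  forall n, is_1runner_abacus A n ->
    [/\ is_partition (abacus_partition A n),
        Phi_spec t (mu1, mu2) (abacus_partition A n)
      & forall lam, is_partition lam -> Phi_spec t (mu1, mu2) lam ->
          lam = abacus_partition A n].
Proof.
move=> he _ hmu1 hmu2 A; split; first exact: abacus_e_1runner.
move=> n /abacus_partition_beads[hp [c hA]].
have hPhi : Phi_spec t (mu1, mu2) (abacus_partition A n).
  apply: (Phi_spec_of_runners (c := c)) => // w; rewrite hA.
  - by rewrite addr0; exact: abacus_e_even.
  - exact: abacus_e_odd.
by split=> // lam hlam hlamPhi; exact: Phi_spec_inj hlam hp hlamPhi hPhi.
Qed.
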